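(* Let $X$ be a $T_1$ space with countable extent and $|X|<\mathfrak{b}$. Then $X$ is absolutely strongly star-Menger if and only if $X$ is selectively $(a)$.
   Context: All spaces are regular. $St(A,\mathcal{U})=\bigcup\{U\in\mathcal{U}:U\cap A\neq\emptyset\}$. $\mathfrak{b}$ is the bounding number. $X$ has countable extent if every closed discrete subset is countable. $X$ is absolutely strongly star-Menger if for every sequence $(\mathcal{U}_n:n\in\omega)$ of open covers and every dense $D\subseteq X$ there are finite $F_n\subseteq D$ with $\{St(F_n,\mathcal{U}_n):n\in\omega\}$ covering $X$. $X$ is selectively $(a)$ if for every sequence $(\mathcal{U}_n)$ of open covers and every dense $D\subseteq X$ there are $C_n\subseteq D$, closed and discrete in $X$, with $\{St(C_n,\mathcal{U}_n):n\in\omega\}$ covering $X$. *)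

From HB Require Import structures.
From mathcomp Require Import all_boot all_order all_algebra.
From mathcomp Require Import all_classical all_reals topology.
Set Implicit Arguments. Unset Strict Implicit. Unset Printing Implicit Defensive.
Local Open Scope classical_set_scope.

Definition closed_discrete {T : topologicalType} (C : set T) : Prop :=
  closed C /\ forall x, C x -> exists U : set T, [/\ open U, U x & U `&` C = [set x]].

Definition countable_extent (T : topologicalType) : Prop :=
  forall C : set T, closed_discrete C -> countable C.

Definition regular_sep (T : topologicalType) : Prop :=
  forall (F : set T) (x : T), closed F -> ~ F x ->
    exists U V : set T, [/\ open U, open V, U x, F `<=` V & U `&` V = set0].

Definition T1_space (T : topologicalType) : Prop :=
  forall x y : T, x <> y -> exists U : set T, [/\ open U, U x & ~ U y].

(* |T| < b  (b = bounding number): every family of functions omega -> omega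
   indexed by T (i.e. of size <= |T|) is <=*-bounded by a single function. *)
Definition card_lt_bounding (T : Type) : Prop :=
  forall f : T -> (nat -> nat), exists g : nat -> nat,
    forall t : T, exists N : nat, forall n : nat, (N <= n)%N -> (f t n <= g n)%N.

Definition open_cover {T : topologicalType} (U : set (set T)) : Prop :=
  (forall u, U u -> open u) /\ \bigcup_(u in U) u = setT.

Definition St {T : Type} (A : set T) (U : set (set T)) : set T :=
  \bigcup_(u in [set u | U u /\ u `&` A !=set0]) u.

Definition absolutely_strongly_star_Menger (T : topologicalType) : Prop :=
  forall Us : nat -> set (set T), (forall n, open_cover (Us n)) ->
  forall D : set T, dense D ->
  exists F : nat -> set T, (forall n, finite_set (F n) /\ F n `<=` D) /\
    \bigcup_(n in setT) St (F n) (Us n) = setT.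

Definition selectively_a (T : topologicalType) : Prop :=
  forall Us : nat -> set (set T), (forall n, open_cover (Us n)) ->
  forall D : set T, dense D ->
  exists C : nat -> set T, (forall n, C n `<=` D /\ closed_discrete (C n)) /\
    \bigcup_(n in setT) St (C n) (Us n) = setT.

From mathcomp Require Import all_boot all_order all_algebra.
From mathcomp Require Import all_classical all_reals topology.
Local Open Scope classical_set_scope.

(* (=>) In a T1 space finite sets are closed and discrete, so the finite sets
   witnessing absolute strong star-Mengerness already witness selectivity (a).

   (<=) Applying selectivity (a) to a constant sequence of covers U and using
   countable extent, each open cover U and dense set D admit a countable
   E ⊆ D whose star St(E, U) is all of X.  Given such countable kernels E_n
   for the covers U_n, enumerate each E_n injectively and, for every point x,
   record the index f_x(n) of a point of E_n whose star contains x.  Since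
   |X| < b one function g eventually dominates every f_x, and the finite sets
   F_n = {e in E_n : index(e) <= g(n)} then satisfy ⋃_n St(F_n, U_n) = X. *)

Lemma StP (T : Type) (A : set T) (U : set (set T)) (x : T) :
  St A U x <-> exists u, [/\ U u, u x & exists2 a, A a & u a].
Proof.
split => [[u [Uu [a [ua Aa]]] ux]|[u [Uu ux [a Aa ua]]]].
  by exists u; split => //; exists a.
by exists u => //; split => //; exists a.
Qed.

Lemma T1_closed_set1 (X : topologicalType) : T1_space X ->
  forall a : X, closed [set a].
Proof.
move=> hT a; rewrite -openC.
have /choice [V hV] : forall y : X,
    exists U : set X, y <> a -> [/\ open U, U y & ~ U a].
  move=> y; case: (pselect (y = a)) => [->|ya]; first by exists set0.
  by have [U hU] := hT y a ya; exists U.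
have -> : ~` [set a] = \bigcup_(y in ~` [set a]) V y.
  apply/seteqP; split => [y ya|y [z za Vz] /= yz].
    by exists y => //; case: (hV y ya).
  by subst y; case: (hV z za).
by apply: bigcup_open => y ya; case: (hV y ya).
Qed.

Lemma T1_finite_closed (X : topologicalType) : T1_space X ->
  forall F : set X, finite_set F -> closed F.
Proof.
move=> hT F fF; have -> : F = \bigcup_(x in F) [set x] by rewrite bigcup_imset1 image_id.
by apply: closed_bigcup => // x _; exact: T1_closed_set1.
Qed.

Lemma T1_finite_closed_discrete (X : topologicalType) : T1_space X ->
  forall F : set X, finite_set F -> closed_discrete F.
Proof.
move=> hT F fF; split; first exact: T1_finite_closed.
move=> x Fx; exists (~` (F `\ x)); split.
- by rewrite openC; apply: T1_finite_closed => //; exact: finite_setD.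
- by move=> [_ /(_ erefl)].
- apply/seteqP; split => [y [nFy Fy]|y /= ->]; last by split => // -[].
  by apply: contrapT => yx; apply: nFy.
Qed.

Lemma countable_star_kernel (X : topologicalType) :
  countable_extent X -> selectively_a X ->
  forall U : set (set X), open_cover U -> forall D : set X, dense D ->
  exists E : set X, [/\ countable E, E `<=` D & St E U = setT].
Proof.
move=> hce hS U hU D dD.
have [C [hC cov]] := hS (fun=> U) (fun=> hU) D dD.
exists (\bigcup_(m in setT) C m); split.
- by apply: bigcup_countable => // m _; apply: hce; case: (hC m).
- by move=> x [m _ Cx]; case: (hC m) => + _; apply.
apply/seteqP; split => // x _.
have : (setT : set X) x by [].
rewrite -cov => -[m _ /StP [u [Uu ux [e Ce ue]]]].
by apply/StP; exists u; split => //; exists e => //; exists m.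
Qed.

Lemma finite_stars_of_countable_stars (X : Type) :
  card_lt_bounding X ->
  forall (Us : nat -> set (set X)) (E : nat -> set X),
  (forall n, countable (E n) /\ St (E n) (Us n) = setT) ->
  exists F : nat -> set X, (forall n, finite_set (F n) /\ F n `<=` E n) /\
    \bigcup_(n in setT) St (F n) (Us n) = setT.
Proof.
move=> hb Us E hE.
have /choice [h hh] : forall n, exists h : X -> nat, {in E n &, injective h}.
  by move=> n; apply/countable_injP; case: (hE n).
have /choice [c hc] : forall p : X * nat, exists e,
    E p.2 e /\ exists u, [/\ Us p.2 u, u p.1 & u e].
  move=> [x n] /=; have [_ cov] := hE n.
  have : St (E n) (Us n) x by rewrite cov.
  by move=> /StP [u [Uu ux [e Ee ue]]]; exists e; split => //; exists u.
have [g hg] := hb (fun x n => h n (c (x, n))).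
exists (fun n => [set e | E n e /\ (h n e <= g n)%N]); split.
  move=> n; split; last by move=> e [].
  apply: (@card_le_finite _ _ _ `I_(g n).+1) => //.
  apply/pcard_leP/injfunPex; exists (h n); first by move=> e [_ le]; rewrite /= ltnS.
  move=> a b /set_mem [Ea _] /set_mem [Eb _]; apply: (hh n); exact: mem_set.
apply/seteqP; split => // x _; have [N hN] := hg x.
have [Ec [u [Uu ux ue]]] := hc (x, N).
by exists N => //; apply/StP; exists u; split => //; exists (c (x, N)) => //; split => //; exact: hN.
Qed.

Theorem mainTheorem18 (X : topologicalType) :
  regular_sep X -> T1_space X -> countable_extent X -> card_lt_bounding X ->
  (absolutely_strongly_star_Menger X <-> selectively_a X).
Proof.
move=> _ hT hce hb; split.
  move=> hA Us hUs D dD; have [F [hF cov]] := hA Us hUs D dD.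
  exists F; split => // n; have [fF FD] := hF n.
  by split => //; exact: T1_finite_closed_discrete.
move=> hS Us hUs D dD.
have /choice [E hE] : forall n, exists E : set X,
    [/\ countable E, E `<=` D & St E (Us n) = setT].
  by move=> n; apply: countable_star_kernel.
have [F [hF cov]] := @finite_stars_of_countable_stars X hb Us E
  (fun n => let: And3 cE _ sE := hE n in conj cE sE).
exists F; split => // n; have [fF FE] := hF n; split => //.
by have [_ ED _] := hE n; exact: subset_trans ED.
Qed.
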